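(* Let $n\in\mathbb{N}$ with $n\ge2$ and $S:=\{0,\dots,n-1\}$. If $C\subseteq\operatorname{codes}(S)$ is $n$-essential, then for every $m\in\{2,\dots,n-1\}$, with $S_m:=\{0,\dots,m-1\}$, the set \[ C':=\{x{\downarrow_{m-1}} : x\in C,\ \operatorname{center}(x)\le m-2\}\subseteq\operatorname{codes}(S_m) \] is $m$-essential.
   Context: A coronal code over $S$ of length $m$ is a formal string $x=c:p_0p_1\dots p_{m-1}$ with $c,p_i\in S$; $\operatorname{center}(x)=c$, $\operatorname{petals}(x)=\{p_0,\dots,p_{m-1}\}$; codes are identified up to rotation/reversal of the petal string, giving $\operatorname{codes}(S)$. For $a,b,c\in S$ (indeterminates), $c^a_b:=\arccos\!\Big(\frac{(c+a)^2+(c+b)^2-(a+b)^2}{2(c+a)(c+b)}\Big)$, and $\alpha(x):=\sum_{i=0}^{m-1} c^{p_i}_{p_{i+1\bmod m}}$. For $\rho\in(0,\infty)^S$, $\alpha(x)|_\rho$ is the value obtained by substituting $\rho(s)$ for each symbol $s$. For $S=\{0,\dots,n-1\}$, a nonempty $C\subseteq\operatorname{codes}(S)$ is fundamental if $\{\operatorname{center}(x):x\in C\}=\{0,\dots,n-2\}$ and for every nonempty $K\subseteq\{0,\dots,n-2\}$ there is $D\subseteq C$ with $\{\operatorname{center}(x):x\in D\}=K$ and $\big(\bigcup_{x\in D}\operatorname{petals}(x)\big)\setminus K\ne\emptyset$. $C$ is $n$-essential if it is fundamental and there exist nondecreasing maps $\rho,\sigma:S\to(0,\infty)$ with $\alpha(x)|_\rho\le2\pi\le\alpha(x)|_\sigma$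 for all $x\in C$. For a code $x$ over $\{0,\dots,n-1\}$ and $k$, $x{\downarrow_k}$ denotes the code obtained by replacing every symbol of $x$ strictly larger than $k$ by $k$. *)

From Stdlib Require Import Reals List Arith Lia.
Open Scope R_scope.

(* A coronal code c:p_0...p_{m-1}, represented by a center and its petal
   string.  All notions below are invariant under rotation/reversal of the
   petal string, so sets of codes are represented as sets of such
   representatives. *)
Record code := mkCode { center : nat; petal_str : list nat }.

Definition is_petal (x : code) (p : nat) : Prop := In p (petal_str x).

Definition in_codes (n : nat) (x : code) : Prop :=
  (center x < n)%nat /\ Forall (fun p => (p < n)%nat) (petal_str x).

Definition angle (c a b : R) : R :=
  acos (((c + a) ^ 2 + (c + b) ^ 2 - (a + b) ^ 2) / (2 * (c + a) * (c + b))).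

Definition alpha (x : code) (rho : nat -> R) : R :=
  let p := petal_str x in
  let m := length p in
  fold_right Rplus 0
    (map (fun i => angle (rho (center x)) (rho (nth i p 0%nat))
                         (rho (nth ((i + 1) mod m) p 0%nat)))
         (seq 0 m)).

Definition fundamental (n : nat) (C : code -> Prop) : Prop :=
  (exists x, C x) /\
  (forall c, (exists x, C x /\ center x = c) <-> (c < n - 1)%nat) /\
  (forall K : nat -> Prop,
     (exists k, K k) -> (forall k, K k -> (k < n - 1)%nat) ->
     exists D : code -> Prop,
       (forall x, D x -> C x) /\
       (forall c, (exists x, D x /\ center x = c) <-> K c) /\
       (exists p, (exists x, D x /\ is_petal x p) /\ ~ K p)).

Definition pos_nondecr (n : nat) (rho : nat -> R) : Prop :=
  (forall i, (i < n)%nat -> 0 < rho i) /\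
  (forall i j, (i <= j)%nat -> (j < n)%nat -> rho i <= rho j).

Definition essential (n : nat) (C : code -> Prop) : Prop :=
  fundamental n C /\
  exists rho sigma : nat -> R,
    pos_nondecr n rho /\ pos_nondecr n sigma /\
    (forall x, C x -> alpha x rho <= 2 * PI <= alpha x sigma).

Definition down (k : nat) (x : code) : code :=
  mkCode (Nat.min (center x) k) (map (fun s => Nat.min s k) (petal_str x)).

Definition restrict_codes (m : nat) (C : code -> Prop) : code -> Prop :=
  fun y => exists x, C x /\ (center x <= m - 2)%nat /\ y = down (m - 1) x.

(* Truncating symbols at m-1 maps codes over {0,...,n-1} to codes over
   {0,...,m-1} and keeps every fundamental witness D fundamental, since a
   petal outside K stays outside K after truncation.  For the radii, the
   angle c^a_b = acos (1 - 2 a/(c+a) * b/(c+b)) is nondecreasing in the petal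
   radii a and b.  Codes of C' have centers below m-1, where truncation does
   not act; so rho restricted to {0,...,m-1} only shrinks the petal radii and
   keeps alpha below 2 pi, while sigma with its top value sigma (m-1) raised
   to sigma (n-1) only enlarges them and keeps alpha above 2 pi. *)
From Stdlib Require Import Reals List Arith Lia Lra.
Open Scope R_scope.

Lemma acos_antimono x y : -1 <= x -> x <= y -> y <= 1 -> acos y <= acos x.
Proof.
  intros hx hxy hy.
  destruct (Rle_dec (acos y) (acos x)) as [hle | nle]; [exact hle |].
  apply Rnot_le_lt in nle.
  pose proof (acos_bound x); pose proof (acos_bound y).
  pose proof (cos_decreasing_1 (acos x) (acos y)) as cos_lt.
  rewrite !cos_acos in cos_lt by lra.
  specialize (cos_lt ltac:(lra) ltac:(lra) ltac:(lra) ltac:(lra) nle); lra.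
Qed.

Lemma ratio_mono c a a' : 0 < c -> 0 < a -> a <= a' -> a / (c + a) <= a' / (c + a').
Proof.
  intros hc ha haa'.
  apply Rmult_le_reg_r with ((c + a) * (c + a')); [nra |].
  replace (a / (c + a) * ((c + a) * (c + a'))) with (a * (c + a')) by (field; lra).
  replace (a' / (c + a') * ((c + a) * (c + a'))) with (a' * (c + a)) by (field; lra).
  nra.
Qed.

Lemma ratio_bounds c a : 0 < c -> 0 < a -> 0 <= a / (c + a) <= 1.
Proof.
  intros hc ha; split.
  - apply Rmult_le_pos; [lra |]; left; apply Rinv_0_lt_compat; lra.
  - apply Rmult_le_reg_r with (c + a); [lra |].
    replace (a / (c + a) * (c + a)) with a by (field; lra); lra.
Qed.

Lemma angle_ratios c a b : 0 < c -> 0 < a -> 0 < b ->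
  angle c a b = acos (1 - 2 * ((a / (c + a)) * (b / (c + b)))).
Proof. intros; unfold angle; f_equal; field; lra. Qed.

Lemma angle_mono c a b a' b' : 0 < c -> 0 < a -> 0 < b -> a <= a' -> b <= b' ->
  angle c a b <= angle c a' b'.
Proof.
  intros hc ha hb haa' hbb'.
  rewrite !angle_ratios by lra.
  pose proof (ratio_mono c a a' hc ha haa'); pose proof (ratio_mono c b b' hc hb hbb').
  pose proof (ratio_bounds c a hc ha); pose proof (ratio_bounds c b hc hb).
  pose proof (ratio_bounds c a' hc ltac:(lra)); pose proof (ratio_bounds c b' hc ltac:(lra)).
  apply acos_antimono; nra.
Qed.

Lemma sum_map_le (l : list nat) (f g : nat -> R) :
  (forall i, In i l -> f i <= g i) ->
  fold_right Rplus 0 (map f l) <= fold_right Rplus 0 (map g l).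
Proof.
  induction l as [| a l IH]; intros fg; simpl; [lra |].
  pose proof (fg a (or_introl eq_refl)).
  pose proof (IH (fun i hi => fg i (or_intror hi))); lra.
Qed.

Lemma alpha_mono x r r' :
  0 < r (center x) -> (forall q, In q (petal_str x) -> 0 < r q) ->
  r (center x) = r' (center x) -> (forall q, In q (petal_str x) -> r q <= r' q) ->
  alpha x r <= alpha x r'.
Proof.
  intros pos_c pos_p same_c le_p; unfold alpha; rewrite <- same_c.
  apply sum_map_le; intros i hi; apply in_seq in hi.
  assert (petal : forall j, (j < length (petal_str x))%nat ->
            In (nth j (petal_str x) 0%nat) (petal_str x)) by (intros; apply nth_In; lia).
  assert (here : In (nth i (petal_str x) 0%nat) (petal_str x)) by (apply petal; lia).
  assert (next : In (nth ((i + 1) mod length (petal_str x)) (petal_str x) 0%nat) (petal_str x))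
    by (apply petal, Nat.mod_upper_bound; lia).
  apply angle_mono; auto.
Qed.

Lemma alpha_down k x r : alpha (down k x) r = alpha x (fun s => r (Nat.min s k)).
Proof.
  unfold alpha, down; simpl; rewrite length_map.
  f_equal; apply map_ext; intros i.
  rewrite <- (map_nth (fun s => Nat.min s k) (petal_str x) 0%nat i).
  rewrite <- (map_nth (fun s => Nat.min s k) (petal_str x) 0%nat).
  reflexivity.
Qed.

Lemma in_codes_down k x : in_codes (S k) (down k x).
Proof.
  split; simpl; [lia |].
  apply Forall_map, Forall_forall; intros; lia.
Qed.

Lemma center_down k x : (center x <= k)%nat -> center (down k x) = center x.
Proof. intros; simpl; lia. Qed.

Lemma is_petal_down k x p : is_petal x p -> is_petal (down k x) (Nat.min p k).
Proof. intros hp; apply in_map_iff; eauto. Qed.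

Lemma fundamental_restrict n C m : (2 <= m)%nat -> (m <= n - 1)%nat ->
  fundamental n C -> fundamental m (restrict_codes m C).
Proof.
  intros hm hmn [_ [centers witnesses]].
  assert (centers' : forall c, (exists y, restrict_codes m C y /\ center y = c) <-> (c < m - 1)%nat).
  { intros c; split.
    - intros [y [[x [_ [hc ->]]] <-]]; simpl; lia.
    - intros hc; destruct (proj2 (centers c) ltac:(lia)) as [x [Cx <-]].
      exists (down (m - 1) x); split; [exists x; repeat split; auto; lia | apply center_down; lia]. }
  split; [| split; [exact centers' |]].
  { destruct (proj2 (centers' 0%nat) ltac:(lia)) as [y [Cy _]]; eauto. }
  intros K hK hKm.
  destruct (witnesses K hK ltac:(intros k hk; specialize (hKm k hk); lia))
    as [D [DC [Dcenters [p [[x [Dx px]] pK]]]]].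
  assert (Dc : forall x, D x -> (center x < m - 1)%nat)
    by (intros x' Dx'; apply hKm, Dcenters; eauto).
  exists (fun y => exists x, D x /\ y = down (m - 1) x); split; [| split].
  - intros y [x' [Dx' ->]]; exists x'; specialize (Dc x' Dx'); repeat split; auto; lia.
  - intros c; split.
    + intros [y [[x' [Dx' ->]] <-]]; rewrite center_down by (specialize (Dc x' Dx'); lia).
      apply Dcenters; eauto.
    + intros hc; destruct (proj2 (Dcenters c) hc) as [x' [Dx' <-]].
      exists (down (m - 1) x'); split; [eauto | apply center_down; specialize (Dc x' Dx'); lia].
  - exists (Nat.min p (m - 1)); split; [exists (down (m - 1) x); split; [eauto | now apply is_petal_down] |].
    intros Kp; specialize (hKm _ Kp).
    rewrite Nat.min_l in Kp by lia; contradiction.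
Qed.

Lemma pos_nondecr_le n m r : (m <= n)%nat -> pos_nondecr n r -> pos_nondecr m r.
Proof. intros hmn [pos mono]; split; intros; [apply pos | apply mono]; lia. Qed.

Definition raise_top (k t : nat) (r : nat -> R) (i : nat) : R :=
  if Nat.ltb i k then r i else r t.

Lemma pos_nondecr_raise_top n k t r : (k <= t)%nat -> (t < n)%nat ->
  pos_nondecr n r -> pos_nondecr (S k) (raise_top k t r).
Proof.
  intros hkt htn [pos mono]; unfold raise_top; split.
  - intros i hi; destruct (Nat.ltb_spec i k); apply pos; lia.
  - intros i j hij hj.
    destruct (Nat.ltb_spec i k), (Nat.ltb_spec j k); try lra; try lia; apply mono; lia.
Qed.

Lemma petals_lt n x q : in_codes n x -> is_petal x q -> (q < n)%nat.
Proof. intros [_ hp] hq; rewrite Forall_forall in hp; auto. Qed.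

Lemma alpha_down_le n k x r :
  in_codes n x -> (center x <= k)%nat -> (k < n)%nat -> pos_nondecr n r ->
  alpha (down k x) r <= alpha x r.
Proof.
  intros xn hc hkn [pos mono]; rewrite alpha_down.
  assert (petal_n : forall q, In q (petal_str x) -> (q < n)%nat)
    by (intros q; apply petals_lt, xn).
  apply alpha_mono; [rewrite Nat.min_l by lia; apply pos; lia | |
                     now rewrite Nat.min_l by lia |].
  - intros q hq; apply pos; specialize (petal_n q hq); lia.
  - intros q hq; apply mono; specialize (petal_n q hq); lia.
Qed.

Lemma alpha_le_down_raise_top n k x r :
  in_codes n x -> (center x < k)%nat -> (k < n)%nat -> pos_nondecr n r ->
  alpha x r <= alpha (down k x) (raise_top k (n - 1) r).
Proof.
  intros xn hc hkn [pos mono]; rewrite alpha_down.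
  assert (petal_n : forall q, In q (petal_str x) -> (q < n)%nat)
    by (intros q; apply petals_lt, xn).
  unfold raise_top.
  apply alpha_mono; [apply pos; lia | auto | |].
  - destruct (Nat.ltb_spec (Nat.min (center x) k) k); [| lia].
    now rewrite Nat.min_l by lia.
  - intros q hq; specialize (petal_n q hq).
    destruct (Nat.ltb_spec (Nat.min q k) k).
    + rewrite Nat.min_l by lia; lra.
    + apply mono; lia.
Qed.

Theorem lemma6p3 (n : nat) (C : code -> Prop) :
  (2 <= n)%nat ->
  (forall x, C x -> in_codes n x) ->
  essential n C ->
  forall m : nat, (2 <= m)%nat -> (m <= n - 1)%nat ->
    (forall y, restrict_codes m C y -> in_codes m y) /\
    essential m (restrict_codes m C).
Proof.
  intros _ Cn [fund [rho [sigma [rho_ok [sigma_ok bounds]]]]] m hm hmn.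
  assert (hSm : S (m - 1) = m) by lia.
  split; [intros y [x [_ [_ ->]]]; rewrite <- hSm at 1; apply in_codes_down |].
  split; [now apply fundamental_restrict with n |].
  exists rho, (raise_top (m - 1) (n - 1) sigma); split; [| split].
  - apply pos_nondecr_le with n; [lia | exact rho_ok].
  - rewrite <- hSm at 1; apply pos_nondecr_raise_top with n; [lia | lia | exact sigma_ok].
  - intros y [x [Cx [hc ->]]].
    destruct (bounds x Cx) as [lower upper].
    split.
    + eapply Rle_trans; [| exact lower]; apply alpha_down_le with n; auto; lia.
    + eapply Rle_trans; [exact upper |]; apply alpha_le_down_raise_top; auto; lia.
Qed.
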